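(* Let $u\in A^*$, $R\subseteq[0,|u|]$, $p=(u,R)$ and $p^*=(u,[0,|u|]\setminus R)$. Then for every word $w\in A^*$, $$\binom{w}{p}=\sum_{v\in A^*}(-1)^{|v|-|u|}\binom{v}{p^*}\binom{w}{v}$$ (the sum has finitely many nonzero terms).
   Context: $A$ is a finite alphabet, $A^*$ the set of finite words over $A$, $|w|$ the length, $[0,k]=\{0,1,\dots,k\}$. For words $u=a_1\cdots a_k$, $v=b_1\cdots b_n$, $\binom{v}{u}$ is the number of order-preserving injections $\varphi:[k]\to[n]$ with $a_i=b_{\varphi(i)}$ for all $i$. For $R\subseteq[0,k]$, an occurrence of $p=(u,R)$ in $v$ is such an injection satisfying additionally $\varphi(i+1)=\varphi(i)+1$ for all $i\in R$, with conventions $\varphi(0)=0$ and $\varphi(k+1)=n+1$; $\binom{v}{p}=\binom{v}{u,R}$ is the number of occurrences of $p$ in $v$. (So $R=\emptyset$ gives $\binom{v}{u}$, $R=[1,k-1]$ counts factor occurrences, $R=[0,k]$ gives $[u=v]$.) *)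

From HB Require Import structures.
From mathcomp Require Import all_boot all_order all_algebra.
Unset Printing Implicit Defensive.
Import Order.TTheory GRing.Theory Num.Theory.

Section Occ.
Variable A : finType.

(* Words are [seq A]; positions of a word of length n are 'I_n (0-based),
   corresponding to the paper's 1-based positions 1..n via i |-> i+1. *)

(* The extended map on [0, k+1] of the paper (1-based), with
   phi(0) = 0 and phi(k+1) = n+1. *)
Definition ext_map (k n : nat) (f : {ffun 'I_k -> 'I_n}) (i : nat) : nat :=
  if i == 0 then 0
  else if i <= k then nth 0 [seq (nat_of_ord (f j)).+1 | j <- enum 'I_k] i.-1
  else n.+1.

Definition is_embedding (u v : seq A) (f : {ffun 'I_(size u) -> 'I_(size v)}) : bool :=
  [forall i : 'I_(size u), forall j : 'I_(size u), (i < j)%N ==> (f i < f j)%N] &&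
  [forall i : 'I_(size u), nth None (map Some u) i == nth None (map Some v) (f i)].

Definition binomw (v u : seq A) : nat :=
  #|[set f : {ffun 'I_(size u) -> 'I_(size v)} | is_embedding u v f]|.

Definition is_occ (u v : seq A) (R : {set 'I_(size u).+1})
    (f : {ffun 'I_(size u) -> 'I_(size v)}) : bool :=
  is_embedding u v f &&
  [forall i : 'I_(size u).+1,
     (i \in R) ==> (ext_map (size u) (size v) f (i.+1) == (ext_map (size u) (size v) f i).+1)].

Definition binomp (v u : seq A) (R : {set 'I_(size u).+1}) : nat :=
  #|[set f : {ffun 'I_(size u) -> 'I_(size v)} | is_occ u v R f]|.

End Occ.

Arguments ext_map : clear implicits.
Arguments is_embedding {A} u v f.
Arguments binomw {A} v u.
Arguments is_occ {A} u v R f.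
Arguments binomp {A} v u R.

From HB Require Import structures.
From mathcomp Require Import all_boot all_order all_algebra.
From mathcomp Require Import zify ring.
Import Order.TTheory GRing.Theory Num.Theory.

(* An occurrence of (u, R) in a :: w either avoids the
   leading a, which is possible iff 0 \notin R, or matches it with the first
   letter of u, the rest being an occurrence of (u', R - 1) in w; likewise an
   embedding of v into a :: w either avoids a or maps the first letter of v
   to it.  Expanding the dual sum for a :: w by the second recurrence, and
   then binom(a :: v', p* ) by the first, the complement turns [0 \notin R]
   into [0 \in R] while the sign flips with |v| = |v'| + 1; so the two copies
   of the dual sum for (w, p) combine into [0 \notin R] times it, and the head
   terms give the dual sum for (w, (u', R - 1)).  Truncating at a length
   N >= |w| loses nothing because binom(w, v) = 0 when |v| > |w|. *)

Set Implicit Arguments.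
Unset Strict Implicit.

Lemma ext_map_ord k n (f : {ffun 'I_k -> 'I_n}) (j : 'I_k) : ext_map k n f j.+1 = (f j).+1.
Proof.
rewrite /ext_map /= ltn_ord (nth_map j); last by rewrite size_enum_ord.
by rewrite nth_ord_enum.
Qed.

Lemma ext_map_ge k n (f : {ffun 'I_k -> 'I_n}) i : (k <= i)%N -> ext_map k n f i.+1 = n.+1.
Proof. by move=> le_ki; rewrite /ext_map /= ltnNge le_ki. Qed.

Lemma ext_map_gt0 k n (f : {ffun 'I_k -> 'I_n}) i : (0 < i)%N -> (0 < ext_map k n f i)%N.
Proof.
case: i => // i _; case: (ltnP i k) => [lt_ik | le_ki].
  by rewrite (ext_map_ord f (Ordinal lt_ik)).
by rewrite ext_map_ge.
Qed.

Definition shift_ffun k n (f : {ffun 'I_k -> 'I_n}) : {ffun 'I_k -> 'I_n.+1} :=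
  [ffun i => lift ord0 (f i)].

Definition cons0_ffun k n (f : {ffun 'I_k -> 'I_n}) : {ffun 'I_k.+1 -> 'I_n.+1} :=
  [ffun i => if unlift ord0 i is Some j then lift ord0 (f j) else ord0].

Lemma cons0_ffun0 k n (f : {ffun 'I_k -> 'I_n}) : cons0_ffun f ord0 = ord0.
Proof. by rewrite ffunE unlift_none. Qed.

Lemma cons0_ffun_lift k n (f : {ffun 'I_k -> 'I_n}) j :
  cons0_ffun f (lift ord0 j) = lift ord0 (f j).
Proof. by rewrite ffunE liftK. Qed.

Lemma shift_ffun_inj k n : injective (@shift_ffun k n).
Proof.
move=> f g /ffunP fg; apply/ffunP => i.
by move: (fg i); rewrite !ffunE => /lift_inj.
Qed.

Lemma cons0_ffun_inj k n : injective (@cons0_ffun k n).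
Proof.
move=> f g /ffunP fg; apply/ffunP => i.
by move: (fg (lift ord0 i)); rewrite !cons0_ffun_lift => /lift_inj.
Qed.

Lemma shift_ffunP k n (f : {ffun 'I_k -> 'I_n.+1}) :
  (forall i, f i != ord0) -> exists g, f = shift_ffun g.
Proof.
move=> f_neq0.
have f_gt0 i : (0 < f i)%N by rewrite lt0n; exact: f_neq0.
have lt_fn i : (f i).-1 < n by rewrite -ltnS prednK.
exists [ffun i => Ordinal (lt_fn i)]; apply/ffunP => i.
by apply: val_inj; rewrite !ffunE /= /bump add1n prednK.
Qed.

Lemma cons0_ffunP k n (f : {ffun 'I_k.+1 -> 'I_n.+1}) :
  f ord0 = ord0 -> (forall i, f (lift ord0 i) != ord0) -> exists g, f = cons0_ffun g.
Proof.
move=> f0 f_neq0.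
have [g /ffunP fE] : exists g, [ffun i => f (lift ord0 i)] = shift_ffun g.
  by apply: shift_ffunP => i; rewrite ffunE.
exists g; apply/ffunP => i; case: (unliftP ord0 i) => [j|] ->.
  by rewrite cons0_ffun_lift; move: (fE j); rewrite !ffunE.
by rewrite cons0_ffun0.
Qed.

Lemma ext_map_shift k n (f : {ffun 'I_k -> 'I_n}) i :
  ext_map k n.+1 (shift_ffun f) i = if i == 0 then 0 else (ext_map k n f i).+1.
Proof.
case: i => // i /=; case: (ltnP i k) => [lt_ik | le_ki]; last by rewrite !ext_map_ge.
by rewrite (ext_map_ord _ (Ordinal lt_ik)) (ext_map_ord f (Ordinal lt_ik)) ffunE lift0.
Qed.

Lemma ext_map_cons0 k n (f : {ffun 'I_k -> 'I_n}) i :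
  ext_map k.+1 n.+1 (cons0_ffun f) i = if i == 0 then 0 else (ext_map k n f i.-1).+1.
Proof.
case: i => // [[|i]] /=; first by rewrite (ext_map_ord _ ord0) cons0_ffun0.
case: (ltnP i k) => [lt_ik | le_ki]; last by rewrite !ext_map_ge.
have -> : i.+2 = (lift ord0 (Ordinal lt_ik) : 'I_k.+1).+1 by rewrite lift0.
by rewrite ext_map_ord cons0_ffun_lift lift0 (ext_map_ord f (Ordinal lt_ik)).
Qed.

Lemma card_inj_image (T U : finType) (h : T -> U) (P : {pred U}) (Q : {pred T}) :
  injective h -> (forall y, y \in P -> exists x, y = h x) ->
  (forall x, (h x \in P) = (x \in Q)) -> #|P| = #|Q|.
Proof.
move=> inj_h onto_h PhQ; rewrite -(card_imset _ inj_h); apply: eq_card => y.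
apply/idP/imsetP => [Py | [x + ->]]; last by rewrite PhQ.
by have [x yE] := onto_h y Py; exists x; rewrite // -PhQ -yE.
Qed.

Lemma card_set_andl (T : finType) (c : bool) (P : pred T) :
  #|[set x | c && P x]| = c * #|[set x | P x]|.
Proof. by case: c; rewrite ?mul1n ?mul0n //; apply: eq_card0 => x; rewrite inE. Qed.

Section Occ.
Variable A : finType.
Implicit Types (a b : A) (u v w : seq A).

Lemma embeddingP u v (f : {ffun 'I_(size u) -> 'I_(size v)}) :
  reflect ({homo f : i j / (i < j)%N} /\
           forall i : 'I_(size u), nth None (map Some u) i = nth None (map Some v) (f i))
          (is_embedding u v f).
Proof.
apply: (iffP andP) => -[mono_f letters_f]; split.
- by move=> i j; move/forallP/(_ i)/forallP/(_ j)/implyP: mono_f.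
- by move=> i; apply/eqP; move/forallP: letters_f.
- by apply/forallP => i; apply/forallP => j; apply/implyP; apply: mono_f.
- by apply/forallP => i; apply/eqP.
Qed.

Lemma occP u v (R : {set 'I_(size u).+1}) (f : {ffun 'I_(size u) -> 'I_(size v)}) :
  reflect (is_embedding u v f /\
           forall i : 'I_(size u).+1, i \in R ->
             ext_map (size u) (size v) f i.+1 = (ext_map (size u) (size v) f i).+1)
          (is_occ u v R f).
Proof.
apply: (iffP andP) => -[emb_f adj_f]; split => //.
- by move=> i iR; apply/eqP; move/forallP/(_ i)/implyP: adj_f; apply.
- by apply/forallP => i; apply/implyP => iR; apply/eqP; apply: adj_f.
Qed.

Lemma is_embedding_shift a u w (f : {ffun 'I_(size u) -> 'I_(size w)}) :
  is_embedding u (a :: w) (shift_ffun f) = is_embedding u w f.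
Proof.
rewrite /is_embedding; congr (_ && _); apply: eq_forallb => i.
  by apply: eq_forallb => j; rewrite !ffunE !lift0.
by rewrite ffunE lift0.
Qed.

Lemma is_embedding_cons0 a b u w (f : {ffun 'I_(size u) -> 'I_(size w)}) :
  is_embedding (b :: u) (a :: w) (cons0_ffun f) = (b == a) && is_embedding u w f.
Proof.
apply/embeddingP/andP => [[mono_f letters_f] | [/eqP <- /embeddingP [mono_f letters_f]]].
  split; first by move: (letters_f ord0); rewrite cons0_ffun0 => -[->].
  apply/embeddingP; split.
    by move=> i j lt_ij; move: (mono_f (lift ord0 i) (lift ord0 j));
      rewrite !cons0_ffun_lift !lift0; apply.
  by move=> i; move: (letters_f (lift ord0 i)); rewrite cons0_ffun_lift !lift0.
split=> [i j|i].
  by case: (unliftP ord0 i) => [i'|] ->; case: (unliftP ord0 j) => [j'|] ->;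
    rewrite ?cons0_ffun_lift ?cons0_ffun0 ?lift0 //= ltnS; apply: mono_f.
by case: (unliftP ord0 i) => [i'|] ->;
  rewrite ?cons0_ffun_lift ?cons0_ffun0 ?lift0 //=; apply: letters_f.
Qed.

Lemma is_occ_shift a u w (R : {set 'I_(size u).+1})
    (f : {ffun 'I_(size u) -> 'I_(size w)}) :
  is_occ u (a :: w) R (shift_ffun f) = (ord0 \notin R) && is_occ u w R f.
Proof.
have adj_shift (i : 'I_(size u).+1) :
    ext_map (size u) (size w).+1 (shift_ffun f) i.+1
      = (ext_map (size u) (size w).+1 (shift_ffun f) i).+1
    <-> i != 0 :> nat /\ ext_map (size u) (size w) f i.+1 = (ext_map (size u) (size w) f i).+1.
  rewrite !ext_map_shift /=; case: (i : nat) => [|j] /=; last by split=> [[->]|[_ ->]].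
  by split=> [[E1]|[]//]; move: (ext_map_gt0 f (ltn0Sn 0)); rewrite E1.
apply/occP/andP; rewrite is_embedding_shift.
  case=> emb_f adj_f; split; last by apply/occP; split=> // i /adj_f/adj_shift[].
  by apply/negP=> /adj_f/adj_shift[].
case=> R0 /occP[emb_f adj_f]; split=> // i iR; apply/adj_shift; split; last exact: adj_f.
by apply: contraNneq R0 => i0; rewrite -(_ : i = ord0) //; apply: val_inj.
Qed.

Definition shift_set n (R : {set 'I_n.+2}) : {set 'I_n.+1} := [set i | lift ord0 i \in R].

Lemma shift_setC n (R : {set 'I_n.+2}) : shift_set (~: R) = ~: shift_set R.
Proof. by apply/setP => i; rewrite !inE. Qed.

Lemma is_occ_cons0 a b u w (R : {set 'I_(size u).+2})
    (f : {ffun 'I_(size u) -> 'I_(size w)}) :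
  is_occ (b :: u) (a :: w) R (cons0_ffun f) = (b == a) && is_occ u w (shift_set R) f.
Proof.
apply/occP/andP; rewrite is_embedding_cons0.
  case=> /andP[ba emb_f] adj_f; split=> //; apply/occP; split=> // j.
  by rewrite inE => /adj_f; rewrite !ext_map_cons0 lift0 /= => -[].
case=> /[dup] ba -> /occP[emb_f adj_f]; split=> // i.
case: (unliftP ord0 i) => [j|] -> /=; rewrite !ext_map_cons0 ?lift0 //= => jR.
by rewrite adj_f // inE.
Qed.

Lemma occ_head_lt b u v (R : {set 'I_(size u).+2})
    (f : {ffun 'I_(size u).+1 -> 'I_(size v)}) :
  is_occ (b :: u) v R f -> forall i, (f ord0 < f (lift ord0 i))%N.
Proof. by case/occP=> /embeddingP[mono_f _] _ i; apply: mono_f; rewrite lift0. Qed.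

Lemma binomp_cons a b u w (R : {set 'I_(size u).+2}) :
  binomp (a :: w) (b :: u) R =
  (ord0 \notin R) * binomp w (b :: u) R + (b == a) * binomp w u (shift_set R).
Proof.
set B := [set f : {ffun 'I_(size u).+1 -> 'I_(size w).+1} | f ord0 == ord0].
rewrite /binomp -(cardsID B) addnC -!card_set_andl; congr (_ + _).
  apply: (card_inj_image (@shift_ffun_inj _ _)) => [f | g].
    rewrite !inE => /andP[f0 occ_f]; apply: shift_ffunP => i.
    by case: (unliftP ord0 i) => [j|] -> //; apply: contraTneq (occ_head_lt occ_f j) => ->.
  by rewrite !inE (@is_occ_shift a (b :: u)) ffunE eq_sym neq_lift.
apply: (card_inj_image (@cons0_ffun_inj (size u) (size w))) => [f | g].
  rewrite !inE => /andP[occ_f /eqP f0]; apply: cons0_ffunP => // i.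
  by apply: contraTneq (occ_head_lt occ_f i) => ->; rewrite f0.
by rewrite !inE is_occ_cons0 cons0_ffun0 eqxx andbT.
Qed.

Lemma binomp_eq0 u v (R : {set 'I_(size u).+1}) : size v < size u -> binomp v u R = 0.
Proof.
move=> lt_vu; apply: eq_card0 => f; rewrite inE; apply/negbTE/negP.
case/occP=> /embeddingP[mono_f _] _.
have inj_f : injective f.
  move=> i j fij; apply/val_inj.
  by case: (ltngtP i j) => // /mono_f; rewrite fij ltnn.
by move: (leq_card f inj_f); rewrite !card_ord leqNgt lt_vu.
Qed.

Lemma binomp_nil w (R : {set 'I_1}) : binomp w [::] R = (ord0 \notin R) || (size w == 0).
Proof.
have occ_nil f : is_occ [::] w R f = (ord0 \notin R) || (size w == 0).
  apply/occP/idP => [[_ adj_f] | R0_or_w0].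
    by case: (boolP (ord0 \in R)) => //= /adj_f; rewrite /ext_map /= => -[->].
  split=> [|i]; first by apply/embeddingP; split; case.
  rewrite (ord1 i) => R0; move: R0_or_w0; rewrite R0 /= => /eqP w0.
  by rewrite /ext_map /= w0.
rewrite /binomp (eq_card (B := fun _ => (ord0 \notin R) || (size w == 0))) => [|f]; last first.
  by rewrite inE occ_nil.
by case: (_ || _); rewrite ?card0 // (eq_card (B := predT)) // card_ffun !card_ord.
Qed.

Definition binomp_head a v u : {set 'I_(size u).+1} -> nat :=
  if u is b :: u' then fun R => (b == a) * binomp v u' (shift_set R) else fun=> 0.

Lemma binomp_consw a v u (R : {set 'I_(size u).+1}) :
  binomp (a :: v) u R = (ord0 \notin R) * binomp v u R + binomp_head a v R.
Proof.
case: u R => [|b u] R; last exact: binomp_cons.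
by rewrite !binomp_nil /= addn0; case: (ord0 \notin R).
Qed.

Lemma binomw_set0 w v : binomw w v = binomp w v set0.
Proof.
apply: eq_card => f; rewrite !inE /is_occ.
by case: forallP => [_ | []]; rewrite ?andbT // => i; rewrite in_set0.
Qed.

Lemma binomw_nil w : binomw w [::] = 1.
Proof. by rewrite binomw_set0 binomp_nil in_set0. Qed.

Lemma binomw_eq0 w v : size w < size v -> binomw w v = 0.
Proof. by rewrite binomw_set0; apply: binomp_eq0. Qed.

Lemma binomw_consw a w v :
  binomw (a :: w) v = binomw w v + (ohead v == Some a) * binomw w (behead v).
Proof.
case: v => [|b v]; first by rewrite !binomw_nil addn0.
rewrite !binomw_set0 binomp_cons in_set0 mul1n; congr (_ + _ * binomp _ _ _).
by apply/setP => i; rewrite !inE.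
Qed.

End Occ.

Local Open Scope ring_scope.

Section DualSum.
Variable A : finType.
Implicit Types (a b : A) (u v w : seq A).

Lemma sum_tuple0 (V : nmodType) (F : seq A -> V) : \sum_(v : 0.-tuple A) F v = F [::].
Proof. by rewrite (big_pred1 [tuple]) // => v; rewrite (tuple0 v); apply/esym/eqP. Qed.

Lemma sum_tupleS (V : nmodType) m (P : pred (seq A)) (F : seq A -> V) :
  \sum_(v : m.+1.-tuple A | P v) F v
  = \sum_(b : A) \sum_(v : m.-tuple A | P (b :: v)) F (b :: v).
Proof.
rewrite pair_big_dep /= (reindex (fun bv : A * m.-tuple A => [tuple of bv.1 :: bv.2])) //=.
exists (fun v : m.+1.-tuple A => (thead v, [tuple of behead v])).
  by move=> [b v] _; congr pair; apply: val_inj.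
by move=> v _; apply: val_inj; rewrite /= [in RHS](tuple_eta v).
Qed.

Lemma sum_words_ohead (V : nmodType) N a (F : nat -> seq A -> V) :
  \sum_(m < N.+2) \sum_(v : m.-tuple A | ohead v == Some a) F m v
  = \sum_(m < N.+1) \sum_(v : m.-tuple A) F m.+1 (a :: v).
Proof.
rewrite big_ord_recl big_pred0 => [|v]; last by rewrite (tuple0 v).
rewrite add0r; apply: eq_bigr => m _.
rewrite (@sum_tupleS _ m (fun v => ohead v == Some a) (F m.+1)) (bigD1 a) //=.
rewrite [X in _ + X]big1 ?addr0 => [|b ba]; first by apply: eq_bigl => v; rewrite eqxx.
by apply: big_pred0 => v; rewrite (inj_eq Some_inj) (negPf ba).
Qed.

Local Notation sgn m k := ((-1 : int) ^ (m%:Z - k%:Z)).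

Lemma sgnS m k : sgn m.+1 k = - sgn m k.
Proof.
rewrite (_ : m.+1%:Z - k%:Z = (m%:Z - k%:Z) + 1); last by lia.
by rewrite exprzDr ?unitrN1 // expr1z mulrN1.
Qed.

Lemma sgnSS m k : sgn m.+1 k.+1 = sgn m k.
Proof. by congr (_ ^ _); lia. Qed.

Definition dual_sum N w u (R : {set 'I_(size u).+1}) : int :=
  \sum_(m < N.+1) \sum_(v : m.-tuple A)
    sgn m (size u) * (binomp (val v) u (~: R))%:Z * (binomw w (val v))%:Z.
Arguments dual_sum : clear implicits.

Lemma dual_sum_nil N u (R : {set 'I_(size u).+1}) :
  dual_sum N [::] u R = (binomp [::] u R)%:Z.
Proof.
rewrite /dual_sum big_ord_recl [X in _ + X]big1 ?addr0 => [|m _]; last first.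
  by apply: big1 => v _; rewrite binomw_eq0 ?mulr0 // (size_tuple v) lift0.
rewrite /= (sum_tuple0 (fun v =>
  sgn 0 (size u) * (binomp v u (~: R))%:Z * (binomw [::] v)%:Z)).
rewrite binomw_nil mulr1; case: u R => [|b u] R; last by rewrite !binomp_eq0 ?mulr0.
by rewrite !binomp_nil !orbT subrr expr0z mul1r.
Qed.

Lemma dual_sum_consw N a w u (R : {set 'I_(size u).+1}) :
  dual_sum N.+1 (a :: w) u R =
  dual_sum N.+1 w u R - (ord0 \in R)%:Z * dual_sum N w u R
  + \sum_(m < N.+1) \sum_(v : m.-tuple A)
      sgn m.+1 (size u) * (binomp_head a v (~: R))%:Z * (binomw w v)%:Z.
Proof.
have -> : dual_sum N.+1 (a :: w) u R = dual_sum N.+1 w u R +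
    \sum_(m < N.+2) \sum_(v : m.-tuple A | ohead v == Some a)
      sgn m (size u) * (binomp v u (~: R))%:Z * (binomw w (behead v))%:Z.
  rewrite /dual_sum; apply/esym; rewrite -big_split; apply: eq_bigr => m _ /=.
  rewrite [X in _ + X]big_mkcond -big_split; apply: eq_bigr => v _ /=.
  rewrite binomw_consw PoszD PoszM.
  by case: (ohead v == Some a); rewrite /= ?mul1r ?mul0r ?mulr0 ?addr0 ?mulrDr.
rewrite (sum_words_ohead _ _
  (fun m v => sgn m (size u) * (binomp v u (~: R))%:Z * (binomw w (behead v))%:Z)).
rewrite -addrA; congr (_ + _).
rewrite /dual_sum mulr_sumr -sumrN -big_split; apply: eq_bigr => m _ /=.
rewrite mulr_sumr -sumrN -big_split; apply: eq_bigr => v _ /=.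
by rewrite binomp_consw in_setC negbK PoszD PoszM sgnS; ring.
Qed.

Lemma sum_binomp_head_cons N a b w u (R : {set 'I_(size u).+2}) :
  \sum_(m < N.+1) \sum_(v : m.-tuple A)
      sgn m.+1 (size (b :: u)) * (binomp_head a v (u := b :: u) (~: R))%:Z
        * (binomw w v)%:Z
  = (b == a)%:Z * dual_sum N w u (shift_set R).
Proof.
rewrite /dual_sum mulr_sumr; apply: eq_bigr => m _.
rewrite mulr_sumr; apply: eq_bigr => v _ /=.
by rewrite PoszM shift_setC sgnSS; ring.
Qed.

Lemma binomp_dual_sum N w u (R : {set 'I_(size u).+1}) :
  (size w <= N)%N -> (binomp w u R)%:Z = dual_sum N w u R.
Proof.
elim: w N u R => [|a w IHw] N u R le_wN; first by rewrite dual_sum_nil.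
case: N le_wN => // N; rewrite ltnS => le_wN.
rewrite binomp_consw dual_sum_consw -(IHw N.+1) ?(leqW le_wN) // -(IHw N) //.
rewrite PoszD PoszM.
case: u R => [|b u] R /=.
  rewrite big1 => [|m _]; last by apply: big1 => v _; rewrite mulr0 mul0r.
  by case: (ord0 \in R); rewrite /= ?mul1r ?mul0r ?subrr ?subr0.
rewrite sum_binomp_head_cons -IHw // PoszM.
by case: (ord0 \in R); rewrite /= ?mul1r ?mul0r ?subrr ?subr0 ?add0r.
Qed.

End DualSum.

Unset Implicit Arguments.
Set Strict Implicit.

Theorem mainTheorem8 (A : finType) (u : seq A) (R : {set 'I_(size u).+1})
    (w : seq A) (N : nat) (hN : (size w <= N)%N) :
  ((binomp w u R)%:Z =
   \sum_(m < N.+1) \sum_(v : m.-tuple A)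
      ((-1 : int) ^ (m%:Z - (size u)%:Z)) * (binomp (val v) u (~: R))%:Z
        * (binomw w (val v))%:Z)%R.
Proof. exact: binomp_dual_sum. Qed.
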